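(* $t(K(12,4))=2$. Moreover, if $S$ is a vertex cut of $K(12,4)$ such that $\frac{|S|}{c(K(12,4)\setminus S)} = 2$, then $S$ is the complement of a maximum independent set of $K(12,4)$.
   Context: The Kneser graph $K(n,k)$ has as vertices the $k$-element subsets of $[n]=\{1,\dots,n\}$, two vertices being adjacent iff they are disjoint. A vertex cut is a set $S$ of vertices whose removal disconnects the graph; $c(G\setminus S)$ is the number of connected components after deleting $S$; the toughness is $t(G)=\min_S |S|/c(G\setminus S)$ over vertex cuts $S$. *)

From mathcomp Require Import all_boot all_order all_algebra.
Set Implicit Arguments. Unset Strict Implicit. Unset Printing Implicit Defensive.
Import Order.TTheory GRing.Theory Num.Theory.

Definition kvert (n k : nat) := {A : {set 'I_n} | #|A| == k}.

Definition kneser_adj (n k : nat) : rel (kvert n k) :=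
  fun A B => [disjoint (val A) & (val B)].

Arguments kneser_adj : clear implicits.

Section Graphs.
Variables (T : finType) (e : rel T).

Definition del_rel (S : {set T}) : rel T :=
  fun x y => [&& x \in ~: S, y \in ~: S & e x y].

Definition ncomp (S : {set T}) : nat :=
  #|[set [set y in ~: S | connect (del_rel S) x y] | x in ~: S]|.

Definition vertex_cut (S : {set T}) : bool := 1 < ncomp S.

Definition is_toughness (t : rat) : Prop :=
  (forall S, vertex_cut S -> (t <= #|S|%:R / (ncomp S)%:R)%R) /\
  (exists S, vertex_cut S /\ (#|S|%:R / (ncomp S)%:R)%R = t).

Definition independent (I : {set T}) : bool :=
  [forall x in I, forall y in I, ~~ e x y].

Definition max_independent (I : {set T}) : bool :=
  independent I && [forall J : {set T}, independent J ==> (#|J| <= #|I|)].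

End Graphs.

From mathcomp Require Import all_boot all_order all_algebra zify.
Set Implicit Arguments. Unset Strict Implicit. Unset Printing Implicit Defensive.
Import Order.TTheory GRing.Theory Num.Theory.

(* In K(12,4) each edge XY lies in exactly one triangle XYZ, Z being the
   complement of X ∪ Y.  For a vertex cut S give every vertex x outside S the
   weight w(x) = |N(x) ∩ S| + #{y ∈ N(x) ∩ S | Z(x,y) ∈ S}.  Counted from the
   side of S, a vertex y ∈ S receives at most deg y = 70 (the x with Z(x,y) ∈ S
   are matched injectively to neighbours of y in S), so Σ w ≤ 70 |S|.
   In a component K, the neighbours y ∈ S of x with Z(x,y) ∉ S are matched
   injectively to neighbours of x in K, whence w(x) ≥ 140 - 3 d_K(x); and
   w(x) ≥ 5, since x and a vertex of another component have at least
   C(5,4) = 5 common neighbours, all in S.  Together these give every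
   component weight at least 140, and more than 140 unless it is a single
   vertex.  Hence |S| ≥ 2 c(G \ S), with equality only if G \ S is an
   independent set of size 495/3 = 165; applying the bound to the complement
   of an independent set shows that no independent set is larger. *)

Lemma double_count (T U : finType) (A : {set T}) (B : {set U}) (Q : T -> U -> bool) :
  \sum_(x in A) #|[set y in B | Q x y]| = \sum_(y in B) #|[set x in A | Q x y]|.
Proof.
under eq_bigr do rewrite -sum1dep_card.
rewrite (exchange_big_dep (mem B)) /=; last by move=> x y _ /andP[].
by apply: eq_bigr => y By; rewrite -sum1dep_card; apply: eq_bigl => x; rewrite By.
Qed.

Lemma ler_nat_div (R : numFieldType) (r s c : nat) :
  0 < c -> (r%:R <= s%:R / c%:R :> R)%R = (r * c <= s).
Proof. by move=> c_gt0; rewrite ler_pdivlMr ?ltr0n // -natrM ler_nat. Qed.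

Lemma eq_nat_div (R : numFieldType) (r s c : nat) :
  0 < c -> (s%:R / c%:R == r%:R :> R)%R = (s == r * c).
Proof.
move=> c_gt0; rewrite -[r%:R%R]divr1 eqr_div ?oner_neq0 ?pnatr_eq0 -?lt0n //.
by rewrite mulr1 -natrM eqr_nat.
Qed.

Section Components.
Variables (T : finType) (e : rel T).
Hypothesis e_sym : symmetric e.
Variable S : {set T}.

Definition component (x : T) : {set T} := [set y in ~: S | connect (del_rel e S) x y].

Definition components : {set {set T}} := [set component x | x in ~: S].

Lemma ncompE : ncomp e S = #|components|.
Proof. by []. Qed.

Lemma components_partition : partition components (~: S).
Proof.
have del_sym : symmetric (del_rel e S).
  by move=> x y; rewrite /del_rel e_sym andbCA.
apply: equivalence_partitionP => x y z _ _ _; split=> [|xy]; first exact: connect0.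
apply/idP/idP; last exact: connect_trans.
by apply: connect_trans; rewrite (sym_connect_sym del_sym).
Qed.

Lemma mem_component x : x \in ~: S -> x \in component x.
Proof. by move=> Wx; rewrite inE Wx connect0. Qed.

Lemma component_subset x : component x \subset ~: S.
Proof. by apply/subsetP => y; rewrite inE => /andP[]. Qed.

Lemma component_closed x y z :
  y \in component x -> z \in ~: S -> e y z -> z \in component x.
Proof.
rewrite !inE => /andP[Wy xy] Wz yz; rewrite Wz (connect_trans xy) //.
by apply: connect1; rewrite /del_rel !inE Wy Wz.
Qed.

Lemma outside_component K : 1 < #|components| -> K \in components ->
  exists2 z, z \in ~: S & z \notin K.
Proof.
move=> /card_gt1P[K1 [K2 [PK1 PK2 K12]]] PK.
have [K' PK' K'K] : exists2 K', K' \in components & K' != K.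
  by case: (eqVneq K1 K) => [eK1 | ]; [exists K2; rewrite // -eK1 eq_sym | exists K1].
have [_ /trivIsetP disj _] := and3P components_partition.
case/imsetP: PK' K'K => z Wz -> zK; exists z => //.
by rewrite (disjointFr (disj _ _ (imset_f _ Wz) PK zK) (mem_component Wz)).
Qed.

Lemma small_components_independent : irreflexive e ->
  {in components, forall K : {set T}, #|K| <= 1} -> independent e (~: S).
Proof.
move=> e_irr small; apply/forall_inP => x Wx; apply/forall_inP => y Wy.
apply/negP => xy; have Kx := mem_component Wx.
have /card_le1P/(_ x Kx y) := small _ (imset_f component Wx).
rewrite (component_closed Kx Wy xy) => /esym/eqP yx.
by move: xy; rewrite yx e_irr.
Qed.

Lemma independent_ncomp : independent e (~: S) -> ncomp e S = #|~: S|.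
Proof.
move=> indep; have singleton x : x \in ~: S -> component x = [set x].
  move=> Wx; apply/setP => y; rewrite !inE; apply/andP/eqP => [[Wy] | ->].
    case/connectP => [[_ -> //|z p] /= /andP[xz _] _].
    move: xz => /and3P[_ Wz xz].
    by move: indep => /forall_inP/(_ x Wx)/forall_inP/(_ z Wz); rewrite xz.
  by rewrite -in_setC; split; last exact: connect0.
by rewrite ncompE /components (eq_in_imset singleton) card_imset //; exact: set1_inj.
Qed.

End Components.

Lemma ncomp_setC_independent (T : finType) (e : rel T) (J : {set T}) :
  independent e J -> ncomp e (~: J) = #|J|.
Proof. by move=> indep; rewrite independent_ncomp setCK. Qed.

Section UniqueTriangles.
Variables (T : finType) (e : rel T) (d c : nat) (third : T -> T -> T).
Hypothesis e_sym : symmetric e.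
Hypothesis e_irr : irreflexive e.
Hypothesis e_regular : forall x, #|[set y | e x y]| = d.
Hypothesis third_adj : forall x y, e x y -> e x (third x y).
Hypothesis thirdC : forall x y, e x y -> third x y = third y x.
Hypothesis thirdK : forall x y, e x y -> third x (third x y) = y.
Hypothesis common_nbrs :
  forall x y, x != y -> ~~ e x y -> c <= #|[set z | e x z && e y z]|.

Lemma third_adj_r x y : e x y -> e y (third x y).
Proof. by move=> xy; rewrite thirdC // third_adj // e_sym. Qed.

Lemma third_inj x : {in [set y | e x y] &, injective (third x)}.
Proof. by move=> y1 y2; rewrite !inE => xy1 xy2 eq12; rewrite -(thirdK xy1) eq12 thirdK. Qed.

Variable S : {set T}.

Definition weight x :=
  #|[set y in S | e x y]| + #|[set y in S | e x y && (third x y \in S)]|.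

Lemma load_le y : y \in S ->
  #|[set x in ~: S | e x y]| + #|[set x in ~: S | e x y && (third x y \in S)]| <= d.
Proof.
move=> Sy; rewrite -(e_regular y) -(cardsID S [set z | e y z]) [leqRHS]addnC.
apply: leq_add; first by apply: subset_leq_card; apply/subsetP => x; rewrite !inE e_sym.
rewrite -(card_in_imset (f := third y)); last first.
  move=> x1 x2; rewrite !inE => /and3P[_ x1y _] /and3P[_ x2y _].
  by apply: third_inj; rewrite inE e_sym.
apply: subset_leq_card; apply/subsetP => _ /imsetP[x /[!inE] /and3P[_ xy Sxy] ->].
by rewrite -thirdC // Sxy third_adj_r.
Qed.

Lemma sum_weight_le : \sum_(x in ~: S) weight x <= d * #|S|.
Proof.
rewrite big_split /= (double_count _ _ e).
rewrite (double_count _ _ (fun x y => e x y && (third x y \in S))) -big_split /=.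
by rewrite mulnC -sum_nat_const; apply: leq_sum => y Sy; exact: load_le.
Qed.

Section ClosedBlock.
Variable K : {set T}.
Hypothesis K_sub : K \subset ~: S.
Hypothesis K_closed : forall x y, x \in K -> y \in ~: S -> e x y -> y \in K.

Lemma nbrs_split x : x \in K -> #|[set y in S | e x y]| + #|[set y in K | e x y]| = d.
Proof.
move=> Kx; rewrite -(e_regular x) -(cardsID S [set y | e x y]).
congr addn; apply: eq_card => y; rewrite !inE; first by rewrite andbC.
case xy: (e x y); rewrite ?andbT ?andbF //.
apply/idP/idP => [Ky | Wy]; first by rewrite -in_setC (subsetP K_sub).
by apply: (K_closed Kx _ xy); rewrite inE.
Qed.

Lemma weight_lb x : x \in K -> 2 * d <= weight x + 3 * #|[set y in K | e x y]|.
Proof.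
move=> Kx; have := nbrs_split Kx; rewrite /weight.
set N := [set y in S | e x y]; set B := [set y | third x y \in S].
have -> : #|[set y in S | e x y && (third x y \in S)]| = #|N :&: B|.
  by apply: eq_card => y; rewrite !inE andbA.
have : #|N :\: B| <= #|[set y in K | e x y]|.
  rewrite -(card_in_imset (f := third x)); last first.
    by move=> y1 y2; rewrite !inE => /and3P[_ _ ?] /and3P[_ _ ?]; apply: third_inj; rewrite inE.
  apply: subset_leq_card; apply/subsetP => _ /imsetP[y /[!inE] /and3P[Wxy _ xy] ->].
  by rewrite third_adj // andbT (K_closed Kx) ?inE // third_adj.
have := cardsID B N; lia.
Qed.

Lemma nbrs_in_block_lt x : x \in K -> #|[set y in K | e x y]| < #|K|.
Proof.
move=> Kx; rewrite (cardsD1 x K) Kx ltnS; apply: subset_leq_card.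
apply/subsetP => y; rewrite !inE => /andP[-> xy]; rewrite andbT.
by apply: contraTneq xy => ->; rewrite e_irr.
Qed.

Lemma weight_ge_common x z : x \in K -> z \in ~: S -> z \notin K -> c <= weight x.
Proof.
move=> Kx Wz Kz; have xz : ~~ e x z by apply: contra Kz; exact: K_closed.
apply: leq_trans (common_nbrs _ xz) (leq_trans _ (leq_addr _ _)).
  by apply: contraNneq Kz => <-.
apply: subset_leq_card; apply/subsetP => y; rewrite !inE => /andP[xy zy].
rewrite xy andbT; apply: contraNT Kz => Sy.
have Ky : y \in K by apply: (K_closed Kx _ xy); rewrite inE.
by apply: (K_closed Ky Wz); rewrite e_sym.
Qed.

Lemma sum_weight_block :
  #|K| * (2 * d) <= \sum_(x in K) weight x + 3 * (#|K| * #|K|.-1).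
Proof.
rewrite [3 * _]mulnCA -!sum_nat_const -big_split /=.
apply: leq_sum => x Kx; apply: leq_trans (weight_lb Kx) _.
rewrite leq_add2l leq_mul2l -ltnS prednK ?nbrs_in_block_lt ?orbT //.
by apply/card_gt0P; exists x.
Qed.

Lemma sum_weight_block_common z :
  z \in ~: S -> z \notin K -> #|K| * c <= \sum_(x in K) weight x.
Proof.
by move=> Wz Kz; rewrite -sum_nat_const; apply: leq_sum => x Kx; exact: weight_ge_common Wz Kz.
Qed.

End ClosedBlock.

End UniqueTriangles.

Section Kneser.
Variables n k : nat.
Local Notation V := (kvert n k).
Local Notation adj := (kneser_adj n k).

Lemma card_kvert (X : V) : #|val X| = k.
Proof. exact/eqP/(valP X). Qed.

Lemma card_kvert_sub (A : {set 'I_n}) : #|[set X : V | val X \subset A]| = 'C(#|A|, k).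
Proof.
rewrite -cards_draws -(card_imset _ val_inj); apply: eq_card => B; rewrite !inE.
apply/imsetP/andP => [[X /[!inE] XA ->] | [BA /eqP cardB]]; first by rewrite card_kvert.
by exists (exist _ B (introT eqP cardB)); rewrite ?inE.
Qed.

Lemma card_kneser : #|[set: V]| = 'C(n, k).
Proof.
have -> : [set: V] = [set X : V | val X \subset setT] by apply/setP => X; rewrite !inE subsetT.
by rewrite card_kvert_sub cardsT card_ord.
Qed.

Lemma kneser_adjE X Y : adj X Y = (val Y \subset ~: val X).
Proof. by rewrite /kneser_adj subsets_disjoint setCK disjoint_sym. Qed.

Lemma kneser_adj_sym : symmetric adj.
Proof. by move=> X Y; rewrite /kneser_adj disjoint_sym. Qed.

Lemma kneser_adj_irr : 0 < k -> irreflexive adj.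
Proof.
move=> k_gt0 X; apply/negbTE; rewrite /kneser_adj -setI_eq0 setIid -card_gt0.
by rewrite card_kvert.
Qed.

Lemma kneser_regular X : #|[set Y | adj X Y]| = 'C(n - k, k).
Proof.
under eq_finset do rewrite kneser_adjE.
by rewrite card_kvert_sub cardsCs setCK card_ord card_kvert.
Qed.

Lemma kneser_common_nbrs X Y :
  ~~ adj X Y -> 'C(n.+1 - 2 * k, k) <= #|[set Z | adj X Z && adj Y Z]|.
Proof.
move=> XY; have meet : 0 < #|val X :&: val Y| by rewrite card_gt0 setI_eq0.
have meet_le : #|val X :&: val Y| <= k.
  by rewrite -[leqRHS](card_kvert X) subset_leq_card ?subsetIl.
have := cardsU (val X) (val Y); rewrite !card_kvert => cardXY.
have /leq_bin2l/leq_trans-> // : n.+1 - 2 * k <= #|~: (val X :|: val Y)|.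
  by rewrite cardsCs setCK card_ord cardXY; lia.
rewrite -card_kvert_sub subset_leq_card //; apply/subsetP => Z.
by rewrite !inE !kneser_adjE setCU subsetI.
Qed.

Definition kneser_third (X Y : V) : V :=
  odflt X [pick Z : V | val Z == ~: (val X :|: val Y)].

Definition kneser_star (i : 'I_n) : {set V} := [set X : V | i \in val X].

Lemma kneser_star_independent i : independent adj (kneser_star i).
Proof.
apply/forall_inP => X /[!inE] iX; apply/forall_inP => Y /[!inE] iY.
by rewrite kneser_adjE; apply/negP => /subsetP/(_ i iY); rewrite inE iX.
Qed.

Lemma card_kneser_star_compl i : #|~: kneser_star i| = 'C(n.-1, k).
Proof.
have -> : ~: kneser_star i = [set X : V | val X \subset ~: [set i]].
  by apply/setP => X; rewrite !inE subsetC sub1set inE.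
by rewrite card_kvert_sub cardsC1 card_ord.
Qed.

Hypothesis n_eq : n = 3 * k.

Lemma kneser_third_val X Y : adj X Y -> val (kneser_third X Y) = ~: (val X :|: val Y).
Proof.
move=> XY; rewrite /kneser_third; case: pickP => [Z /eqP // | noZ].
have cardC : #|~: (val X :|: val Y)| == k.
  move: XY; rewrite /kneser_adj -setI_eq0 => /eqP XY.
  by rewrite cardsCs setCK card_ord cardsU XY cards0 !card_kvert n_eq; apply/eqP; lia.
by have := noZ (exist (fun A : {set _} => #|A| == k) _ cardC); rewrite /= eqxx.
Qed.

Lemma kneser_third_adj X Y : adj X Y -> adj X (kneser_third X Y).
Proof. by move=> XY; rewrite kneser_adjE kneser_third_val // setCS subsetUl. Qed.

Lemma kneser_thirdC X Y : adj X Y -> kneser_third X Y = kneser_third Y X.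
Proof. by move=> XY; apply: val_inj; rewrite !kneser_third_val 1?setUC // kneser_adj_sym. Qed.

Lemma kneser_thirdK X Y : adj X Y -> kneser_third X (kneser_third X Y) = Y.
Proof.
move=> XY; apply: val_inj; rewrite !kneser_third_val ?kneser_third_adj //.
move: XY; rewrite kneser_adjE => YX.
by rewrite setCU setCK setIUr [~: _ :&: _]setIC setICr set0U; apply/setIidPr.
Qed.

End Kneser.

Arguments kneser_adj_sym {n k}.
Arguments kneser_adj_irr {n k}.

Local Notation V := (kvert 12 4).
Local Notation adj := (kneser_adj 12 4).
Local Notation third := (@kneser_third 12 4).
Local Notation n_eq := (erefl : 12 = 3 * 4).

Lemma card_kneser_12_4 : #|[set: V]| = 495.
Proof. exact: card_kneser. Qed.

Lemma kneser_12_4_regular X : #|[set Y | adj X Y]| = 70.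
Proof. exact: kneser_regular. Qed.

Lemma kneser_12_4_common_nbrs X Y :
  X != Y -> ~~ adj X Y -> 5 <= #|[set Z | adj X Z && adj Y Z]|.
Proof. by move=> _; exact: kneser_common_nbrs. Qed.

Lemma block_arith m A : 0 < m -> m * 140 <= A + 3 * (m * m.-1) -> m * 5 <= A ->
  140 + (1 < m) <= A.
Proof.
move=> m_gt0 quad lin; case: (ltnP 1 m) => [m_gt1 | m_le1]; last first.
  have m1 : m = 1 by lia.
  by move: quad; rewrite m1 /=; lia.
(* the linear bound wins from m = 29 on, the quadratic one below *)
have [m_small | m_big] := ltnP m 29; last by lia.
have : 2 <= m.-1 * (140 - 3 * m) by apply: (@leq_mul 1 2); lia.
nia.
Qed.

Lemma kneser_component_weight (S K : {set V}) : vertex_cut adj S ->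
  K \in components adj S -> 140 + (1 < #|K|) <= \sum_(X in K) weight adj third S X.
Proof.
rewrite /vertex_cut ncompE => cut_S PK.
have [z Wz zK] := outside_component kneser_adj_sym cut_S PK.
case/imsetP: PK zK => x Wx -> zK.
have K_closed := @component_closed _ adj S x.
have := sum_weight_block_common third kneser_adj_sym kneser_12_4_common_nbrs K_closed Wz zK.
have := sum_weight_block (kneser_adj_irr (isT : 0 < 4)) kneser_12_4_regular
  (kneser_third_adj n_eq) (kneser_thirdK n_eq) (component_subset _ _ x) K_closed.
have : 0 < #|component adj S x| by apply/card_gt0P; exists x; exact: mem_component.
exact: block_arith.
Qed.

Lemma card_kneser_12_4_star (i : 'I_12) : #|kneser_star 4 i| = 165.
Proof.
have := cardsC (kneser_star 4 i).
by rewrite card_kneser_star_compl (_ : 'C(11, 4) = 330) // -cardsT card_kneser_12_4; lia.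
Qed.

Lemma kneser_cut_sum S : vertex_cut adj S ->
  \sum_(K in components adj S) (140 + (1 < #|K|)) <= 70 * #|S|.
Proof.
move=> cut_S; apply: leq_trans (sum_weight_le kneser_adj_sym kneser_12_4_regular
  (kneser_third_adj n_eq) (kneser_thirdC n_eq)
  (kneser_thirdK n_eq) S).
rewrite (set_partition_big _ (components_partition kneser_adj_sym S)).
by apply: leq_sum => K; exact: kneser_component_weight.
Qed.

Lemma kneser_cut_bound S : vertex_cut adj S -> 2 * ncomp adj S <= #|S|.
Proof.
move=> cut_S; have := kneser_cut_sum cut_S.
rewrite big_split /= sum_nat_const -ncompE; lia.
Qed.

Lemma kneser_tight_cut_independent S :
  vertex_cut adj S -> #|S| = 2 * ncomp adj S -> independent adj (~: S).
Proof.
move=> cut_S tight.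
apply: (small_components_independent (kneser_adj_irr (isT : 0 < 4))) => K PK.
have := kneser_cut_sum cut_S; rewrite big_split /= sum_nat_const -ncompE tight (bigD1 K) //=.
by case: (ltnP 1 #|K|) => //= _; lia.
Qed.

Lemma kneser_independent_card J : independent adj J -> #|J| <= 165.
Proof.
move=> indep; case: (ltnP 1 #|J|) => [J_gt1 | J_le1]; last exact: leq_trans J_le1 _.
have := kneser_cut_bound (S := ~: J); rewrite /vertex_cut ncomp_setC_independent //.
by move=> /(_ J_gt1); have := cardsC J; rewrite -cardsT card_kneser_12_4; lia.
Qed.

Theorem theorem5p2 :
  is_toughness (kneser_adj 12 4) 2%:R /\
  (forall S : {set kvert 12 4},
     vertex_cut (kneser_adj 12 4) S ->
     (#|S|%:R / (ncomp (kneser_adj 12 4) S)%:R = 2%:R :> rat)%R ->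
     exists I : {set kvert 12 4},
       max_independent (kneser_adj 12 4) I /\ S = ~: I).
Proof.
have ncomp_gt0 S : vertex_cut adj S -> 0 < ncomp adj S by move/ltnW.
split; [split|].
- by move=> S cut_S; rewrite ler_nat_div ?ncomp_gt0 //; exact: kneser_cut_bound.
- exists (~: kneser_star 4 (ord0 : 'I_12)).
  rewrite /vertex_cut ncomp_setC_independent ?kneser_star_independent //.
  rewrite card_kneser_star_compl card_kneser_12_4_star; split; first by [].
  by apply/eqP; rewrite eq_nat_div.
- move=> S cut_S /eqP; rewrite eq_nat_div ?ncomp_gt0 // => /eqP tight.
  have indep := kneser_tight_cut_independent cut_S tight.
  have cardW : #|~: S| = 165.
    have := cardsC S; rewrite -cardsT card_kneser_12_4 tight independent_ncomp //.
    (* the two occurrences of #|~: S| differ in inferred instances; [set] merges them for lia *)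
    by set w := #|~: S|; lia.
  exists (~: S); rewrite setCK; split => //; apply/andP; split => //.
  by apply/forallP => J; apply/implyP; rewrite cardW; exact: kneser_independent_card.
Qed.
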